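(* Let $(G,s,t)$ be an oriented serial superedge with principal subgraphs $(G_1,s_1,t_1),\dots,(G_k,s_k,t_k)$ (so $s_1=s$, $t_i=s_{i+1}$, $t_k=t$), each $G_i$ non-serial. For each $i$ let $\mathcal{T}_i\subseteq\mathsf{ST}(G_i)$ contain exactly one spanning tree from each orbit of $\mathsf{ST}(G_i)$ under $\mathrm{Aut}_{\mathrm{or}}(G_i,s_i,t_i)$. Then the set $\{T_1\cup\dots\cup T_k : T_i\in\mathcal{T}_i\text{ for }1\le i\le k\}$ consists of spanning trees of $G$ and contains exactly one spanning tree from each orbit of $\mathsf{ST}(G)$ under $\mathrm{Aut}_{\mathrm{or}}(G,s,t)$.
   Context: All graphs are finite, simple and undirected. An oriented series-parallel graph is a triple $(G,s,t)$ where $G$ is a graph and $s\neq t$ are vertices, defined recursively: (i) $G$ is a single edge with vertex set $\{s,t\}$; or (ii) (serial superedge) there are $k\ge 2$ oriented series-parallel graphs $(G_1,s_1,t_1),\dots,(G_k,s_k,t_k)$ with $s_1=s$, $t_k=t$, $t_i=s_{i+1}$ for $1\le i<k$, $V(G_i)\cap V(G_{i+1})=\{s_{i+1}\}$, $V(G_i)\cap V(G_j)=\emptyset$ for $|i-j|\ge2$, and $G=G_1\cup\dots\cup G_k$; or (iii) (parallel superedge) there are $k\ge2$ oriented series-parallel graphs $(G_1,s,t),\dots,(G_k,s,t)$ with $V(G_i)\cap V(G_j)=\{s,t\}$ for $i\neq j$ and $G=G_1\cup\dots\cup G_k$. The $G_i$ are the principal subgraphs. A graph is non-serial if it is not a serial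 superedge. For an oriented series-parallel graph $(H,u,v)$, $\mathrm{Aut}_{\mathrm{or}}(H,u,v)$ is the group of automorphisms of $H$ fixing $u$ and $v$, acting on subgraphs of $H$; $\mathsf{ST}(H)$ is the set of spanning trees of $H$. Two subgraphs $A,B$ are in the same orbit iff $A=\sigma(B)$ for some $\sigma$ in the group. *)

From mathcomp Require Import all_boot fingroup perm.
Set Implicit Arguments. Unset Strict Implicit. Unset Printing Implicit Defensive.

(* A finite simple graph on (a subset of) the finite vertex universe T:
   a vertex set and a set of edges, each edge being a 2-element vertex set. *)
Notation graph T := ({set T} * {set {set T}})%type.

Section SP.
Variable T : finType.

Definition gV (G : graph T) : {set T} := G.1.
Definition gE (G : graph T) : {set {set T}} := G.2.

Definition gunion (k : nat) (Gs : nat -> graph T) : graph T :=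
  (\bigcup_(i < k) gV (Gs i), \bigcup_(i < k) gE (Gs i)).

Definition serial_cond (k : nat) (Gs : nat -> graph T) (ss ts : nat -> T)
    (G : graph T) (s t : T) : Prop :=
  [/\ 2 <= k, ss 0 = s, ts k.-1 = t,
      (forall i, i.+1 < k -> ts i = ss i.+1) &
   [/\
      (forall i, i.+1 < k -> gV (Gs i) :&: gV (Gs i.+1) = [set ss i.+1]),
      (forall i j, i < k -> j < k -> i.+2 <= j -> gV (Gs i) :&: gV (Gs j) = set0)
    & G = gunion k Gs]].

Definition parallel_cond (k : nat) (Gs : nat -> graph T) (ss ts : nat -> T)
    (G : graph T) (s t : T) : Prop :=
  [/\ 2 <= k, (forall i, i < k -> ss i = s /\ ts i = t),
      (forall i j, i < k -> j < k -> i != j -> gV (Gs i) :&: gV (Gs j) = [set s; t])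
    & G = gunion k Gs].

Inductive osp : graph T -> T -> T -> Prop :=
| osp_edge s t : s != t -> osp ([set s; t], [set [set s; t]]) s t
| osp_serial k Gs ss ts G s t :
    s != t -> serial_cond k Gs ss ts G s t ->
    (forall i, i < k -> osp (Gs i) (ss i) (ts i)) -> osp G s t
| osp_parallel k Gs ss ts G s t :
    s != t -> parallel_cond k Gs ss ts G s t ->
    (forall i, i < k -> osp (Gs i) (ss i) (ts i)) -> osp G s t.

Definition serial_sp (G : graph T) (s t : T) : Prop :=
  s != t /\
  exists k Gs ss ts, serial_cond k Gs ss ts G s t /\
    (forall i, i < k -> osp (Gs i) (ss i) (ts i)).

Definition nonserial (G : graph T) (s t : T) : Prop :=
  osp G s t /\ ~ serial_sp G s t.

Definition adj (F : {set {set T}}) : rel T := fun x y => [set x; y] \in F.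

Definition is_tree (H : graph T) : Prop :=
  (forall x y, x \in gV H -> y \in gV H -> connect (adj (gE H)) x y) /\
  (forall c : seq T, 3 <= size c -> ~ ucycle (adj (gE H)) c).

Definition spanning_tree (G H : graph T) : Prop :=
  [/\ gV H = gV G, gE H \subset gE G & is_tree H].

(* automorphisms of G fixing s and t (as permutations of the vertex
   universe; only their restriction to V(G) matters for the action) *)
Definition aut_or (G : graph T) (s t : T) (g : {perm T}) : Prop :=
  [/\ g @: gV G = gV G, [set g @: e | e : {set T} in gE G] = gE G, g s = s & g t = t].

Definition gact (g : {perm T}) (A : graph T) : graph T :=
  (g @: gV A, [set g @: e | e : {set T} in gE A]).

Definition same_orbit (G : graph T) (s t : T) (A B : graph T) : Prop :=
  exists g, aut_or G s t g /\ A = gact g B.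

Definition orbit_transversal (G : graph T) (s t : T) (TT : graph T -> Prop) : Prop :=
  (forall X, TT X -> spanning_tree G X) /\
  (forall Y, spanning_tree G Y -> exists! X, TT X /\ same_orbit G s t X Y).

End SP.

(* Number the blocks G_0, ..., G_(k-1), with junctions t_j = s_(j+1) for j < k-1.  Since each G_i is
   non-serial, deleting a vertex other than s_i, t_i leaves s_i and t_i connected; hence the vertices
   separating s from t in G are exactly the junctions, and t_b is reachable from s avoiding t_a iff
   b < a.  An automorphism of G fixing s and t permutes the separators preserving this order, so it
   fixes every junction, hence every initial segment G_0 u ... u G_j (the vertices reachable from s
   avoiding t_j, plus t_j), and so maps each G_i onto itself.  Conversely automorphisms of the G_i fix
   the junctions and glue to one of G.  Finally the spanning trees of G are exactly the unions of
   spanning trees of the G_i (paths of G retract onto each block), so the orbit of a spanning tree Y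
   of G is determined by the orbits of the restrictions of Y to the G_i. *)

From mathcomp Require Import all_boot fingroup perm.
From mathcomp Require Import zify.
Set Implicit Arguments. Unset Strict Implicit. Unset Printing Implicit Defensive.

Section Graphs.
Variable T : finType.
Implicit Types (F : {set {set T}}) (H : graph T) (e : rel T) (x y u v c : T).

Definition adj_avoid F c : rel T := fun x y => [&& adj F x y, x != c & y != c].

Definition connected H :=
  forall x y, x \in gV H -> y \in gV H -> connect (adj (gE H)) x y.

Definition acyclic F := forall p : seq T, 3 <= size p -> ~ ucycle (adj F) p.

Definition all_bridges F := forall x y, x != y -> [set x; y] \in F ->
  ~ connect (adj (F :\ [set x; y])) x y.

Definition wf_graph H := forall ed, ed \in gE H ->
  exists x y, [/\ x != y, ed = [set x; y], x \in gV H & y \in gV H].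

Definition restr H Y : graph T := (gV H, gE Y :&: gE H).

Lemma adj_sym F : symmetric (adj F).
Proof. by move=> x y; rewrite /adj setUC. Qed.

Lemma adj_avoid_adj F c : subrel (adj_avoid F c) (adj F).
Proof. by move=> x y /andP[]. Qed.

Lemma adj_subset F F' : F \subset F' -> subrel (adj F) (adj F').
Proof. by move=> /subsetP sFF' x y /sFF'. Qed.

Lemma connect_subrel e e' x y : subrel e e' -> connect e x y -> connect e' x y.
Proof. by move=> ee'; apply: connect_sub => u v /ee'/connect1. Qed.

Lemma connect_map e e' (f : T -> T) x y :
  (forall u v, e u v -> f u = f v \/ e' (f u) (f v)) ->
  connect e x y -> connect e' (f x) (f y).
Proof.
move=> fe /connectP[p ep ->] {y}; elim: p x ep => [|z p IHp] x //= /andP[/fe exz /IHp].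
by case: exz => [->//|/connect1]; apply: connect_trans.
Qed.

Lemma acyclic_sub F F' : F \subset F' -> acyclic F' -> acyclic F.
Proof.
move=> sFF' acF' p p3 /andP[cp up]; apply: (acF' p p3).
by rewrite /ucycle up (sub_cycle (adj_subset sFF')).
Qed.

Lemma adj_mem H u v : wf_graph H -> adj (gE H) u v -> u \in gV H /\ v \in gV H.
Proof.
move=> wfH /wfH[x [y [_ Exy xV yV]]].
have: u \in [set x; y] by rewrite -Exy set21.
have: v \in [set x; y] by rewrite -Exy set22.
by rewrite !inE => /orP[]/eqP-> /orP[]/eqP->.
Qed.

Lemma edge_subset_V H ed : wf_graph H -> ed \in gE H -> {subset ed <= gV H}.
Proof.
by move=> wfH /wfH[x [y [_ -> xV yV]]] z; rewrite !inE => /orP[]/eqP->.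
Qed.

Lemma eq_in_imset_edge H (g h : T -> T) ed :
  wf_graph H -> {in gV H, g =1 h} -> ed \in gE H -> g @: ed = h @: ed.
Proof. by move=> wfH gh /(edge_subset_V wfH) edH; apply: eq_in_imset => v /edH/gh. Qed.

Lemma adj_setD1 F x y u v :
  adj (F :\ [set x; y]) u v = ([set u; v] != [set x; y]) && adj F u v.
Proof. by rewrite /adj in_setD1. Qed.

Lemma acyclic_all_bridges F : acyclic F -> all_bridges F.
Proof.
move=> acF x y xy Fxy /connectP[p p_xy y_last].
case: (shortenP p_xy) y_last => {p_xy} p' p_xy up _ y_last.
have subF : subrel (adj (F :\ [set x; y])) (adj F) by apply: adj_subset; apply: subD1set.
apply: (acF (x :: p')).
  case: p' p_xy up y_last => [|z [|w q]] //= => [_ _ yx|/andP[xz _] _ yz].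
    by rewrite yx eqxx in xy.
  by move: xz; rewrite -yz adj_setD1 /adj eqxx.
by rewrite /ucycle up andbT /= rcons_path -y_last (sub_path subF p_xy) adj_sym.
Qed.

Lemma all_bridges_acyclic F : all_bridges F -> acyclic F.
Proof.
move=> brF [|x [|y p]] // p3; rewrite /ucycle /= rcons_path.
move=> /and4P[/and3P[Fxy path_p last_x] /[!inE] /norP[xy xp] yp _].
apply: (brF x y xy Fxy); rewrite (sym_connect_sym (adj_sym _)).
apply/connectP; exists (rcons p x); last by rewrite last_rcons.
rewrite rcons_path; apply/andP; split.
  have avoid_x : {in predC1 x &, subrel (adj F) (adj (F :\ [set x; y]))}.
    move=> u v /= ux vx Fuv; rewrite adj_setD1 Fuv andbT.
    apply: contraNneq ux => Euv; have: x \in [set u; v] by rewrite Euv set21.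
    by rewrite !inE eq_sym (eq_sym x v) (negPf vx) orbF.
  apply: (sub_in_path avoid_x) path_p; rewrite /= eq_sym xy /=.
  by apply/allP => w wp; apply: contraNneq xp => <-.
rewrite adj_setD1 last_x andbT; apply: contraNneq yp => Ex.
have: y \in [set last y p; x] by rewrite Ex set22.
rewrite !inE (eq_sym y x) (negPf xy) orbF => /eqP ->.
by case: p p3 {path_p last_x Ex xp} => // z q _ /=; apply: mem_last.
Qed.

Lemma adj_avoid_subset F F' c : F \subset F' -> subrel (adj_avoid F c) (adj_avoid F' c).
Proof.
by move=> sFF' x y /and3P[Fxy xc yc]; rewrite /adj_avoid (adj_subset sFF' Fxy) xc yc.
Qed.

Lemma adj_avoid_notin H c :
  wf_graph H -> c \notin gV H -> subrel (adj (gE H)) (adj_avoid (gE H) c).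
Proof.
move=> wfH cH x y Hxy; have [xH yH] := adj_mem wfH Hxy.
by rewrite /adj_avoid Hxy /=; apply/andP; split; apply: contraNneq cH => <-.
Qed.

Lemma mem_gunionV k (Gs : nat -> graph T) v :
  reflect (exists2 i, i < k & v \in gV (Gs i)) (v \in gV (gunion k Gs)).
Proof.
by apply: (iffP bigcupP) => [[i _ vi]|[i ik vi]]; [exists i | exists (Ordinal ik)].
Qed.

Lemma mem_gunionE k (Gs : nat -> graph T) ed :
  reflect (exists2 i, i < k & ed \in gE (Gs i)) (ed \in gE (gunion k Gs)).
Proof.
by apply: (iffP bigcupP) => [[i _ ei]|[i ik ei]]; [exists i | exists (Ordinal ik)].
Qed.

Lemma gunion_subE k (Gs : nat -> graph T) i :
  i < k -> gE (Gs i) \subset gE (gunion k Gs).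
Proof. by move=> ik; apply/subsetP => ed ei; apply/mem_gunionE; exists i. Qed.

Lemma wf_gunion k (Gs : nat -> graph T) :
  (forall i, i < k -> wf_graph (Gs i)) -> wf_graph (gunion k Gs).
Proof.
move=> wfGs ed /mem_gunionE[i ik /(wfGs i ik)[x [y [xy -> xi yi]]]].
by exists x, y; split=> //; apply/mem_gunionV; exists i.
Qed.

Lemma eq_gunion k (f f' : nat -> graph T) :
  (forall i, i < k -> f i = f' i) -> gunion k f = gunion k f'.
Proof. by move=> ff'; congr pair; apply: eq_bigr => i _; rewrite ff'. Qed.

Lemma inj_imset_stable (aT : finType) (f : aT -> aT) (A : {set aT}) :
  injective f -> {in A, forall a, f a \in A} -> f @: A = A.
Proof.
move=> injf fA; apply/eqP; rewrite eqEcard card_imset // leqnn andbT.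
by apply/subsetP => _ /imsetP[a aA ->]; apply: fA.
Qed.

Section PermInvariance.
Variables (F : {set {set T}}) (g : {perm T}).
Hypothesis gF : [set g @: ed | ed : {set T} in F] = F.

Lemma adj_perm u v : adj F (g u) (g v) = adj F u v.
Proof.
rewrite /adj; have ->: [set g u; g v] = g @: [set u; v] by rewrite imsetU1 imset_set1.
by rewrite -{1}gF mem_imset //; apply/imset_inj/perm_inj.
Qed.

Lemma adj_avoid_perm c u v : adj_avoid F (g c) (g u) (g v) = adj_avoid F c u v.
Proof. by rewrite /adj_avoid adj_perm !(inj_eq perm_inj). Qed.

Lemma connect_avoid_perm c x y :
  connect (adj_avoid F (g c)) (g x) (g y) = connect (adj_avoid F c) x y.
Proof.
apply/idP/idP => [|cxy]; last first.
  by apply: connect_map cxy => u v uv; right; rewrite adj_avoid_perm.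
move/(connect_map (f := (g^-1)%g) (e' := adj_avoid F c)); rewrite !permK; apply.
by move=> u v uv; right; rewrite -adj_avoid_perm !permKV.
Qed.

End PermInvariance.

Lemma aut_or_inv H a b g : aut_or H a b g -> aut_or H a b g^-1.
Proof.
case=> gV_eq gE_eq ga gb; split; last 2 first.
- by rewrite -{1}ga permK.
- by rewrite -{1}gb permK.
- by rewrite -{1}gV_eq -imset_comp (eq_imset _ (permK g)) imset_id.
rewrite -{1}gE_eq -imset_comp -[RHS]imset_id; apply: eq_imset => ed /=.
by rewrite -imset_comp (eq_imset _ (permK g)) imset_id.
Qed.

Lemma aut_or_memE H a b g v : aut_or H a b g -> (g v \in gV H) = (v \in gV H).
Proof. by case=> gV_eq _ _ _; rewrite -{1}gV_eq mem_imset //; apply: perm_inj. Qed.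

Lemma restr_gact H a b g Y : aut_or H a b g -> restr H (gact g Y) = gact g (restr H Y).
Proof.
case=> gV_eq gE_eq _ _; rewrite /restr /gact /= gV_eq; congr pair.
by rewrite imsetI /gE /= ?gE_eq //; apply: in2W; apply/imset_inj/perm_inj.
Qed.

Record two_terminal H a b : Prop := TwoTerminal {
  source_in : a \in gV H;
  sink_in : b \in gV H;
  source_neq_sink : a != b;
  two_terminal_wf : wf_graph H;
  connect_source_sink : connect (adj (gE H)) a b;
  connect_avoid_sink :
    forall v, v \in gV H -> v != b -> connect (adj_avoid (gE H) b) a v }.

Lemma connect_source H a b v :
  two_terminal H a b -> v \in gV H -> connect (adj (gE H)) a v.
Proof.
case=> _ _ _ _ conn_ab conn_avoid vH; have [->//|vb] := eqVneq v b.
exact: connect_subrel (@adj_avoid_adj _ b) (conn_avoid v vH vb).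
Qed.

End Graphs.

Lemma bounded_choice (A : Type) (a0 : A) (P : nat -> A -> Prop) n :
  (forall i, i < n -> exists x, P i x) -> exists f : nat -> A, forall i, i < n -> P i (f i).
Proof.
elim: n => [|n IHn] exP; first by exists (fun=> a0).
have [f Pf] := IHn (fun i lt_in => exP i (ltnW lt_in)).
have [x Px] := exP n (ltnSn n).
exists (fun i => if i == n then x else f i) => i; rewrite ltnS leq_eqVlt.
by case: eqP => [-> //|_] /= lt_in; apply: Pf.
Qed.

Section Serial.
Variables (T : finType) (k : nat) (Gs : nat -> graph T) (ss ts : nat -> T)
  (G : graph T) (s t : T).
Hypothesis G_serial : serial_cond k Gs ss ts G s t.
Hypothesis blocks_tt : forall i, i < k -> two_terminal (Gs i) (ss i) (ts i).

Local Notation V i := (gV (Gs i)).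
Local Notation E i := (gE (Gs i)).

Let k_gt1 : 1 < k. Proof. by case: G_serial. Qed.
Let ss0 : ss 0 = s. Proof. by case: G_serial. Qed.
Let ts_last : ts k.-1 = t. Proof. by case: G_serial. Qed.
Let tsS i : i.+1 < k -> ts i = ss i.+1. Proof. by case: G_serial => _ _ _ /(_ i). Qed.
Let G_gunion : G = gunion k Gs. Proof. by case: G_serial => _ _ _ _ []. Qed.
Let ss_in i : i < k -> ss i \in V i. Proof. by move/blocks_tt/source_in. Qed.
Let ts_in i : i < k -> ts i \in V i. Proof. by move/blocks_tt/sink_in. Qed.
Let ss_neq_ts i : i < k -> ss i != ts i. Proof. by move/blocks_tt/source_neq_sink. Qed.
Let wf_block i : i < k -> wf_graph (Gs i). Proof. by move/blocks_tt/two_terminal_wf. Qed.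

Lemma serial_V v : reflect (exists2 i, i < k & v \in V i) (v \in gV G).
Proof. by rewrite G_gunion; apply: mem_gunionV. Qed.

Lemma serial_E ed : reflect (exists2 i, i < k & ed \in E i) (ed \in gE G).
Proof. by rewrite G_gunion; apply: mem_gunionE. Qed.

Lemma wf_serial : wf_graph G.
Proof. by rewrite G_gunion; apply: wf_gunion. Qed.

Lemma block_subE i : i < k -> E i \subset gE G.
Proof. by rewrite G_gunion; apply: gunion_subE. Qed.

Lemma blocks_meet_lt i j x :
  i < j -> j < k -> x \in V i -> x \in V j -> j = i.+1 /\ x = ss j.
Proof.
case: G_serial => _ _ _ _ [meet_next meet_far _] ij jk xi xj.
have [ej | ne] := eqVneq j i.+1.
  subst j; have: x \in V i :&: V i.+1 by rewrite inE xi.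
  by rewrite meet_next // inE => /eqP.
have: x \in V i :&: V j by rewrite inE xi.
by rewrite meet_far ?inE //; lia.
Qed.

Lemma blocks_meet_eq i j x y : i < k -> j < k -> i != j ->
  x \in V i -> x \in V j -> y \in V i -> y \in V j -> x = y.
Proof.
move=> ik jk; rewrite neq_ltn => /orP[] lt_ij xi xj yi yj.
  have [_ ->] := blocks_meet_lt lt_ij jk xi xj.
  by have [_ ->] := blocks_meet_lt lt_ij jk yi yj.
have [_ ->] := blocks_meet_lt lt_ij ik xj xi.
by have [_ ->] := blocks_meet_lt lt_ij ik yj yi.
Qed.

Lemma shared_vertex_terminal a i v : a < k -> i < k -> a != i ->
  v \in V a -> v \in V i -> v = ss a \/ v = ts a.
Proof.
move=> ak ik; rewrite neq_ltn => /orP[] lt_ai va vi.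
  by have [ei ->] := blocks_meet_lt lt_ai ik va vi; right; rewrite tsS // -ei.
by have [ea ->] := blocks_meet_lt lt_ai ak vi va; left.
Qed.

Lemma ts_notin_lt i b : i < k -> b < i -> ts i \notin V b.
Proof.
move=> ik bi; apply/negP => tsb.
have [_ eq_ts] := blocks_meet_lt bi ik tsb (ts_in ik).
by have := ss_neq_ts ik; rewrite eq_ts eqxx.
Qed.

Lemma ts_inj a b : a < k -> b < k -> ts a = ts b -> a = b.
Proof.
move=> ak bk eq_ts; case: (ltngtP a b) => // lt_ab.
  by have := ts_notin_lt bk lt_ab; rewrite -eq_ts ts_in.
by have := ts_notin_lt ak lt_ab; rewrite eq_ts ts_in.
Qed.

Lemma ts_neq_s j : j < k -> ts j != s.
Proof.
move=> jk; rewrite -ss0; case: j jk => [|j] jk; first by rewrite eq_sym ss_neq_ts.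
by apply: contraNneq (ts_notin_lt jk (ltn0Sn j)) => ->; apply: ss_in; lia.
Qed.

Lemma connect_from_source (e : rel T) i v : i < k ->
  (forall j, j < i -> connect e (ss j) (ts j)) -> connect e (ss i) v -> connect e s v.
Proof.
elim: i v => [|i IHi] v ik conn_blocks conn_v; first by rewrite -ss0.
apply: connect_trans conn_v; rewrite -tsS //.
by apply: IHi => [|j ji|]; [lia | apply: conn_blocks; lia | apply: conn_blocks].
Qed.

Definition below i v := [exists b : 'I_k, (b < i) && (v \in V b)].

Lemma belowP i v : i <= k -> reflect (exists2 b, b < i & v \in V b) (below i v).
Proof.
move=> ik; apply: (iffP existsP) => [[b /andP[bi vb]]|[b bi vb]]; first by exists b.
have bk : b < k by lia.
by exists (Ordinal bk); rewrite /= bi.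
Qed.

Lemma below_block i j w : i < k -> j < k -> w \in V i -> w != ts j ->
  below j.+1 w = (i <= j).
Proof.
move=> ik jk wi wj; apply/(belowP _ jk)/idP => [[b bj wb]|ij]; last by exists i.
rewrite leqNgt; apply/negP => ji.
have [ei ew] := blocks_meet_lt (leq_trans bj ji) ik wb wi.
have eb : j = b by lia.
by move: wj; rewrite ew ei eb -tsS ?eqxx //; lia.
Qed.

Lemma below_ts a b : a <= k -> b < k -> below a (ts b) = (b < a).
Proof.
move=> ak bk; apply/(belowP _ ak)/idP => [[b' b'a tsb']|ba]; last by exists b; rewrite ?ts_in.
rewrite ltnNge; apply/negP => ab.
by move: tsb'; apply/negP; apply: ts_notin_lt; lia.
Qed.

Lemma connect_avoid_junction j v : j < k ->
  connect (adj_avoid (gE G) (ts j)) s v = (v != ts j) && below j.+1 v.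
Proof.
move=> jk; apply/idP/idP => [conn_sv|/andP[vj /(belowP _ jk)[b bj vb]]].
  pose side := [pred w | (w != ts j) && below j.+1 w].
  have side_closed : closed (adj_avoid (gE G) (ts j)) side.
    move=> u w /and3P[/serial_E[i ik Ei_uw] uj wj].
    have [ui wi] := adj_mem (wf_block ik) Ei_uw.
    by rewrite !inE uj wj /= (below_block ik jk ui uj) (below_block ik jk wi wj).
  have k0 : 0 < k by lia.
  have s0 : s \in V 0 by rewrite -ss0 ss_in.
  have sj : s != ts j by rewrite eq_sym ts_neq_s.
  rewrite -[_ && _]/(v \in side) -(closed_connect side_closed conn_sv).
  by rewrite inE sj (below_block k0 jk s0 sj).
have bk : b < k by lia.
apply: (connect_from_source bk) => [i ib|].
  have ik : i < k by lia.
  apply: connect_subrel (adj_avoid_subset (block_subE ik)) _.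
  apply: connect_subrel (adj_avoid_notin (wf_block ik) (ts_notin_lt jk _)) _; first lia.
  exact: connect_source_sink (blocks_tt ik).
apply: connect_subrel (adj_avoid_subset (block_subE bk)) _.
have [lt_bj | eq_bj] := ltnP b j.
  apply: connect_subrel (adj_avoid_notin (wf_block bk) (ts_notin_lt jk lt_bj)) _.
  exact: connect_source (blocks_tt bk) vb.
have eq_jb : j = b by lia.
by rewrite eq_jb in vj *; apply: connect_avoid_sink (blocks_tt bk) _ vb vj.
Qed.

Lemma serial_two_terminal : s != t -> two_terminal G s t.
Proof.
have [k0 k1] : 0 < k /\ k.-1 < k by lia.
move=> st; split=> //.
- by apply/serial_V; exists 0; rewrite -?ss0 ?ss_in.
- by apply/serial_V; exists k.-1; rewrite -?ts_last ?ts_in.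
- exact: wf_serial.
- rewrite -ts_last; apply: (connect_from_source k1) => [i ik|]; last first.
    exact: connect_subrel (adj_subset (block_subE k1)) (connect_source_sink (blocks_tt k1)).
  have ik' := ltn_trans ik k1.
  exact: connect_subrel (adj_subset (block_subE ik')) (connect_source_sink (blocks_tt ik')).
move=> v /serial_V[i ik vi] vt; rewrite -ts_last connect_avoid_junction // ts_last vt.
by apply/belowP; [lia | exists i; first lia].
Qed.

(* Collapses the blocks before G_i onto s_i and those after it onto t_i, so that every edge of G
   outside G_i is contracted to a single vertex. *)
Definition retract i v := if v \in V i then v else if below i v then ss i else ts i.

Lemma retract_block i j u : i < k -> j < k -> j != i -> u \in V j ->
  retract i u = if j < i then ss i else ts i.
Proof.
move=> ik jk ji uj; rewrite /retract; case: (ltngtP j i) => [lt_ji|lt_ij|eq_ji]; last first.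
- by rewrite eq_ji eqxx in ji.
- case: ifP => [ui|_]; first by have [ej ->] := blocks_meet_lt lt_ij jk ui uj; rewrite tsS -ej.
  case: (belowP _ (ltnW ik)) => // -[a ai ua].
  by have [] := blocks_meet_lt (ltn_trans ai lt_ij) jk ua uj; lia.
case: ifP => [ui|_]; first by have [_ ->] := blocks_meet_lt lt_ji ik uj ui.
by case: (belowP _ (ltnW ik)) => // -[]; exists j.
Qed.

Lemma connect_restr_block (F : {set {set T}}) i x y : F \subset gE G -> i < k ->
  x \in V i -> y \in V i -> connect (adj F) x y -> connect (adj (F :&: E i)) x y.
Proof.
move=> FG ik xi yi /(connect_map (f := retract i) (e' := adj (F :&: E i))).
rewrite /retract xi yi; apply=> u v Fuv.
have /serial_E[j jk Ej_uv] := subsetP FG _ Fuv.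
have [uj vj] := adj_mem (wf_block jk) Ej_uv.
have [eq_ji|ne_ji] := eqVneq j i; last first.
  by left; rewrite -/(retract i u) -/(retract i v) !(retract_block ik jk ne_ji).
by right; rewrite -eq_ji uj vj /adj inE; apply/andP.
Qed.

Lemma spanning_tree_restr Y i :
  spanning_tree G Y -> i < k -> spanning_tree (Gs i) (restr (Gs i) Y).
Proof.
case=> YV YE [Yconn Yacyc] ik; split=> //; first exact: subsetIr.
split; last exact: acyclic_sub (subsetIl _ _) Yacyc.
move=> x y /= xi yi; apply: connect_restr_block => //.
by apply: Yconn; rewrite YV; apply/serial_V; exists i.
Qed.

Lemma blocks_edge_disjoint i j ed :
  i < k -> j < k -> i != j -> ed \in E i -> ed \in E j -> False.
Proof.
move=> ik jk ij /(wf_block ik)[x [y [xy -> xi yi]]] Ej.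
have [xj yj] := adj_mem (wf_block jk) Ej.
by move: xy; rewrite (blocks_meet_eq ik jk ij xi xj yi yj) eqxx.
Qed.

Section BlockSubgraphs.
Variable f : nat -> graph T.
Hypothesis f_sub : forall i, i < k -> gE (f i) \subset E i.

Lemma gunion_blockE i : i < k -> gE (gunion k f) :&: E i = gE (f i).
Proof.
move=> ik; apply/setP => ed; rewrite inE; apply/andP/idP => [[/mem_gunionE[j jk fj] ei]|fi].
  have [<- //|ji] := eqVneq j i.
  by case: (blocks_edge_disjoint jk ik ji (subsetP (f_sub jk) _ fj) ei).
by split; [apply/mem_gunionE; exists i | apply: (subsetP (f_sub ik))].
Qed.

Lemma gunion_subE_serial : gE (gunion k f) \subset gE G.
Proof.
apply/subsetP => ed /mem_gunionE[i ik fi].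
by apply/serial_E; exists i => //; apply: (subsetP (f_sub ik)).
Qed.

End BlockSubgraphs.

Section BlockSpanningTrees.
Variable f : nat -> graph T.
Hypothesis f_tree : forall i, i < k -> spanning_tree (Gs i) (f i).

Let f_V i : i < k -> gV (f i) = V i. Proof. by case/f_tree. Qed.
Let f_sub i : i < k -> gE (f i) \subset E i. Proof. by case/f_tree. Qed.

Lemma gunion_V_serial : gV (gunion k f) = gV G.
Proof. by rewrite G_gunion; apply: eq_bigr => i _; apply: f_V. Qed.

Lemma restr_gunion i : i < k -> restr (Gs i) (gunion k f) = f i.
Proof.
move=> ik; rewrite /restr (gunion_blockE f_sub ik) -(f_V ik).
by case: (f i).
Qed.

Lemma connected_gunion : connected (gunion k f).
Proof.
have conn_block i x y : i < k -> x \in V i -> y \in V i ->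
    connect (adj (gE (gunion k f))) x y.
  move=> ik xi yi; apply: connect_subrel (adj_subset (gunion_subE f ik)) _.
  by case: (f_tree ik) => fV _ [fconn _]; apply: fconn; rewrite fV.
have conn_s v : v \in gV G -> connect (adj (gE (gunion k f))) s v.
  case/serial_V => i ik vi; apply: (connect_from_source ik) => [j ji|].
    have jk : j < k by lia.
    exact: conn_block jk (ss_in jk) (ts_in jk).
  exact: conn_block ik (ss_in ik) vi.
move=> x y; rewrite gunion_V_serial => xG yG.
by apply: connect_trans (conn_s y yG); rewrite (sym_connect_sym (@adj_sym _ _)) conn_s.
Qed.

Lemma acyclic_gunion : acyclic (gE (gunion k f)).
Proof.
apply: all_bridges_acyclic => x y xy /mem_gunionE[i ik fi_xy] conn_xy.
have [xi yi] := adj_mem (wf_block ik) (subsetP (f_sub ik) _ fi_xy).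
have /acyclic_all_bridges bridges_fi : acyclic (gE (f i)) by case: (f_tree ik) => _ _ [].
apply: (bridges_fi x y xy fi_xy).
have sub_G : gE (gunion k f) :\ [set x; y] \subset gE G.
  exact: subset_trans (subD1set _ _) (gunion_subE_serial f_sub).
move: (connect_restr_block sub_G ik xi yi conn_xy); rewrite setIDAC gunion_blockE //.
Qed.

Lemma spanning_tree_gunion : spanning_tree G (gunion k f).
Proof.
split; [exact: gunion_V_serial | exact: gunion_subE_serial | split].
- exact: connected_gunion.
- exact: acyclic_gunion.
Qed.

End BlockSpanningTrees.

Definition glue_fun (gs : nat -> {perm T}) v :=
  if [pick a : 'I_k | v \in V a] is Some a then gs a v else v.

Section GlueFun.
Variable gs : nat -> {perm T}.
Hypothesis gs_aut : forall i, i < k -> aut_or (Gs i) (ss i) (ts i) (gs i).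

Lemma glue_fun_block i v : i < k -> v \in V i -> glue_fun gs v = gs i v.
Proof.
have fix_shared a j w : a < k -> j < k -> a != j -> w \in V a -> w \in V j -> gs a w = w.
  move=> ak jk aj wa wj; case: (gs_aut ak) => _ _ ga gb.
  by case: (shared_vertex_terminal ak jk aj wa wj) => ->.
move=> ik vi; rewrite /glue_fun; case: pickP => [a va|none]; last first.
  by move: (none (Ordinal ik)); rewrite vi.
have [<- //|ai] := eqVneq (a : nat) i.
rewrite (fix_shared _ _ _ (ltn_ord a) ik ai va vi).
by rewrite (fix_shared _ _ _ ik (ltn_ord a) _ vi va) // eq_sym.
Qed.

End GlueFun.

Section GlueAuts.
Variable gs : nat -> {perm T}.
Hypothesis gs_aut : forall i, i < k -> aut_or (Gs i) (ss i) (ts i) (gs i).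

Lemma glue_funK : cancel (glue_fun gs) (glue_fun (fun i => (gs i)^-1%g)).
Proof.
have gs_inv_aut i : i < k -> aut_or (Gs i) (ss i) (ts i) (gs i)^-1%g by move/gs_aut/aut_or_inv.
move=> v; rewrite {2}/glue_fun; case: pickP => [a va|none].
  have ak := ltn_ord a.
  by rewrite (glue_fun_block gs_inv_aut ak) ?permK // (aut_or_memE _ (gs_aut ak)).
by rewrite /glue_fun; case: pickP => // a; rewrite none.
Qed.

Lemma glue_auts : exists2 g : {perm T}, aut_or G s t g &
  forall i, i < k -> {in V i, g =1 gs i}.
Proof.
pose g := perm (can_inj glue_funK).
have g_block i : i < k -> {in V i, g =1 gs i}.
  by move=> ik v vi; rewrite permE; apply: glue_fun_block.
have [k0 k1] : 0 < k /\ k.-1 < k by lia.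
exists g => //; split.
- apply: inj_imset_stable; first exact: perm_inj.
  move=> v /serial_V[i ik vi]; apply/serial_V; exists i => //.
  by rewrite (g_block i) // (aut_or_memE _ (gs_aut ik)).
- apply: inj_imset_stable; first exact/imset_inj/perm_inj.
  move=> ed /serial_E[i ik ei]; apply/serial_E; exists i => //.
  rewrite (eq_in_imset_edge (wf_block ik) (g_block i ik) ei).
  by case: (gs_aut ik) => _ <- _ _; apply: imset_f.
- by rewrite -ss0 (g_block 0) ?ss_in //; case: (gs_aut k0).
by rewrite -ts_last (g_block k.-1) ?ts_in //; case: (gs_aut k1).
Qed.

End GlueAuts.

Lemma gact_blocks g gs Y : aut_or G s t g ->
  (forall i, i < k -> aut_or (Gs i) (ss i) (ts i) (gs i)) ->
  (forall i, i < k -> {in V i, g =1 gs i}) -> spanning_tree G Y ->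
  gact g Y = gunion k (fun i => gact (gs i) (restr (Gs i) Y)).
Proof.
case=> gV_eq _ _ _ gs_aut g_block [YV YE _]; rewrite /gact /gunion; congr pair.
  rewrite YV gV_eq G_gunion; apply: eq_bigr => i _.
  by case: (gs_aut i (ltn_ord i)) => ->.
have g_edge i ed : i < k -> ed \in E i -> g @: ed = gs i @: ed.
  by move=> ik; apply: eq_in_imset_edge (wf_block ik) (g_block i ik).
apply/setP => ed'; apply/imsetP/bigcupP => [[ed Yed ->]|[i _ /imsetP[ed]]].
  have /serial_E[i ik ei] := subsetP YE _ Yed.
  by exists (Ordinal ik) => //; rewrite (g_edge i) //; apply: imset_f; rewrite inE Yed.
by rewrite inE => /andP[Yed ei] ->; exists ed => //; rewrite (g_edge i).
Qed.

Lemma same_orbit_gunion f Y : spanning_tree G Y ->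
  (forall i, i < k -> same_orbit (Gs i) (ss i) (ts i) (f i) (restr (Gs i) Y)) ->
  same_orbit G s t (gunion k f) Y.
Proof.
move=> Ytree f_orbit.
have [gs gs_orbit] := bounded_choice 1%g f_orbit.
have gs_aut i : i < k -> aut_or (Gs i) (ss i) (ts i) (gs i) by case/gs_orbit.
have [g g_aut g_block] := glue_auts gs_aut.
exists g; split=> //; rewrite (gact_blocks g_aut gs_aut g_block Ytree).
by apply: eq_gunion => i /gs_orbit[].
Qed.

Section Automorphisms.
Hypothesis blocks_avoid : forall i v, i < k -> v != ss i -> v != ts i ->
  connect (adj_avoid (E i) v) (ss i) (ts i).

Definition separator c := [&& c != s, c != t & ~~ connect (adj_avoid (gE G) c) s t].

Lemma separator_junction j : j < k.-1 -> separator (ts j).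
Proof.
move=> jk1; have jk : j < k by lia.
have tj : ts j != t by rewrite -ts_last; apply/eqP => /ts_inj; lia.
rewrite /separator ts_neq_s // tj connect_avoid_junction // -{2}ts_last below_ts //; lia.
Qed.

Lemma separatorP c : separator c -> exists2 j, j < k.-1 & c = ts j.
Proof.
case/and3P=> cs ct /negP nconn.
have [/existsP[j /eqP ->]|no_junction] := boolP [exists j : 'I_k.-1, c == ts j].
  by exists j.
case: nconn; rewrite -ts_last.
have c_ts j : j < k -> c != ts j.
  move=> jk; have [jk1|jk1] := ltnP j k.-1.
    by apply: contra no_junction => cj; apply/existsP; exists (Ordinal jk1).
  have ->: j = k.-1 by lia.
  by rewrite ts_last.
have c_ss i : i < k -> c != ss i.
  by case: i => [|i] ik; rewrite ?ss0 // -tsS // c_ts //; lia.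
have k1 : k.-1 < k by lia.
have conn_block i : i < k -> connect (adj_avoid (gE G) c) (ss i) (ts i).
  move=> ik; apply: connect_subrel (adj_avoid_subset (block_subE ik)) _.
  exact: blocks_avoid ik (c_ss i ik) (c_ts i ik).
by apply: (connect_from_source k1) => [i ik|]; apply: conn_block; lia.
Qed.

Lemma separator_aut g c : aut_or G s t g -> separator (g c) = separator c.
Proof.
case=> _ gE_eq gs gt.
have gcs : (g c != s) = (c != s) by rewrite -{1}gs (inj_eq perm_inj).
have gct : (g c != t) = (c != t) by rewrite -{1}gt (inj_eq perm_inj).
have gconn : connect (adj_avoid (gE G) (g c)) s t = connect (adj_avoid (gE G) c) s t.
  by rewrite -{1}gs -{1}gt connect_avoid_perm.
by rewrite /separator gcs gct gconn.
Qed.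

Lemma connect_avoid_junctions a b : a < k -> b < k ->
  connect (adj_avoid (gE G) (ts a)) s (ts b) = (b < a).
Proof.
move=> ak bk; rewrite connect_avoid_junction // below_ts //.
have [-> | ne] := eqVneq b a; first by rewrite eqxx ltnn.
have -> : ts b != ts a by apply/eqP => /(ts_inj bk ak) eba; rewrite eba eqxx in ne.
by rewrite ltnS leq_eqVlt (negPf ne).
Qed.

Lemma aut_fix_junction j : j < k.-1 -> forall g, aut_or G s t g -> g (ts j) = ts j.
Proof.
elim/ltn_ind: j => j IH jk1 g g_aut; have jk : j < k by lia.
have image_junction h : aut_or G s t h -> exists2 m, m < k.-1 & h (ts j) = ts m.
  by move=> h_aut; apply: separatorP; rewrite separator_aut // separator_junction.
have image_above h m : aut_or G s t h -> m < k.-1 -> h (ts j) = ts m -> j <= m.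
  move=> h_aut mk1 hj; rewrite leqNgt; apply/negP => mj; have mk : m < k by lia.
  have : h (ts m) = h (ts j) by rewrite (IH m mj mk1 h h_aut) hj.
  by move/perm_inj/(ts_inj mk jk) => emj; rewrite emj ltnn in mj.
have [m mk1 gj] := image_junction g g_aut.
have [m' mk1' gj'] := image_junction _ (aut_or_inv g_aut).
have jm := image_above g m g_aut mk1 gj.
have jm' := image_above _ m' (aut_or_inv g_aut) mk1' gj'.
(* g and g^-1 both move t_j weakly upwards; transporting "t_j is reachable avoiding t_m" by g^-1
   shows that they cannot move it strictly. *)
case: g_aut => _ gE_eq gs _.
have := connect_avoid_perm gE_eq (ts j) s (g^-1%g (ts j)).
rewrite gs permKV gj gj' !connect_avoid_junctions; try lia.
by move=> same_order; congr ts; lia.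
Qed.
Lemma aut_fix_ts g j : aut_or G s t g -> j < k -> g (ts j) = ts j.
Proof.
move=> g_aut jk; have [jk1|jk1] := ltnP j k.-1; first exact: aut_fix_junction.
have ->: j = k.-1 by lia.
by case: g_aut => _ _ _ gt; rewrite ts_last.
Qed.

Lemma aut_fix_ss g i : aut_or G s t g -> i < k -> g (ss i) = ss i.
Proof.
move=> g_aut; case: i => [|i] ik; first by case: g_aut => _ _ gs _; rewrite ss0.
by rewrite -tsS // aut_fix_ts //; lia.
Qed.

Lemma aut_below g j v : aut_or G s t g -> j < k -> below j.+1 (g v) = below j.+1 v.
Proof.
move=> g_aut jk; have [jk1|jk1] := ltnP j k.-1; last first.
  have ->: j.+1 = k by lia.
  have below_G w : below k w = (w \in gV G) by apply/(belowP _ (leqnn k))/serial_V.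
  by rewrite !below_G (aut_or_memE _ g_aut).
have below_conn w : below j.+1 w = (w == ts j) || connect (adj_avoid (gE G) (ts j)) s w.
  rewrite connect_avoid_junction //; have [->|] //= := eqVneq w (ts j).
  by rewrite below_ts // ltnSn.
have gj := aut_fix_junction jk1 g_aut.
case: g_aut => _ gE_eq gs _.
have eq_g : (g v == ts j) = (v == ts j) by rewrite -{1}gj (inj_eq perm_inj).
have conn_g :
    connect (adj_avoid (gE G) (ts j)) s (g v) = connect (adj_avoid (gE G) (ts j)) s v.
  by rewrite -{1}gj -{1}gs connect_avoid_perm.
by rewrite !below_conn eq_g conn_g.
Qed.

Lemma aut_block_V g i v : aut_or G s t g -> i < k -> v \in V i -> g v \in V i.
Proof.
move=> g_aut ik vi.
have: below i.+1 (g v) by rewrite aut_below //; apply/(belowP _ ik); exists i.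
case/(belowP _ ik) => b bi gvb; have [<- //|ne] := eqVneq b i.
case: i ik vi bi ne => [|i] ik vi bi ne; first by case: b bi gvb ne.
have: below i.+1 v.
  rewrite -(aut_below v g_aut (ltnW ik)); apply/(belowP _ (ltnW ik)).
  by exists b => //; lia.
case/(belowP _ (ltnW ik)) => b' b'i vb'.
by have [_ ->] := blocks_meet_lt b'i ik vb' vi; rewrite aut_fix_ss // ss_in.
Qed.

Lemma aut_block g i : aut_or G s t g -> i < k -> aut_or (Gs i) (ss i) (ts i) g.
Proof.
move=> g_aut ik; split; [| |exact: aut_fix_ss|exact: aut_fix_ts].
  by apply: inj_imset_stable; [exact: perm_inj | move=> v; apply: aut_block_V].
apply: inj_imset_stable; first exact/imset_inj/perm_inj.
move=> ed ei /=; have [x [y [xy Exy xi yi]]] := wf_block ik ei; subst ed.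
have gxy : g @: [set x; y] = [set g x; g y] by rewrite imsetU1 imset_set1.
have: g @: [set x; y] \in gE G.
  by case: g_aut => _ <- _ _; apply: imset_f; apply/serial_E; exists i.
rewrite gxy => /serial_E[j jk Ej]; have [gxj gyj] := adj_mem (wf_block jk) Ej.
have [-> //|ij] := eqVneq i j.
have gxi := aut_block_V g_aut ik xi; have gyi := aut_block_V g_aut ik yi.
by move: xy; rewrite -(inj_eq (@perm_inj _ g)) (blocks_meet_eq ik jk ij gxi gxj gyi gyj) eqxx.
Qed.

Lemma same_orbit_restr X Y i : same_orbit G s t X Y -> i < k ->
  same_orbit (Gs i) (ss i) (ts i) (restr (Gs i) X) (restr (Gs i) Y).
Proof.
case=> g [g_aut ->] ik; exists g; split; first exact: aut_block.
exact: restr_gact (aut_block g_aut ik).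
Qed.

Variable Tfam : nat -> graph T -> Prop.
Hypothesis Tfam_transversal :
  forall i, i < k -> orbit_transversal (Gs i) (ss i) (ts i) (Tfam i).

Lemma serial_orbit_transversal : orbit_transversal G s t
  (fun X => exists f : nat -> graph T, (forall i, i < k -> Tfam i (f i)) /\ X = gunion k f).
Proof.
have Tfam_tree i X : i < k -> Tfam i X -> spanning_tree (Gs i) X.
  by case/Tfam_transversal => + _; apply.
split=> [_ [f [f_T ->]]|Y Ytree].
  by apply: spanning_tree_gunion => i ik; apply: Tfam_tree (f_T i ik).
have orbit_rep i : i < k ->
    exists X, Tfam i X /\ same_orbit (Gs i) (ss i) (ts i) X (restr (Gs i) Y).
  move=> ik; case: (Tfam_transversal ik) => _ /(_ _ (spanning_tree_restr Ytree ik)).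
  by case=> X [? _]; exists X.
have [f f_rep] := bounded_choice Y orbit_rep.
exists (gunion k f); split.
  split; first by exists f; split=> // i /f_rep[].
  by apply: same_orbit_gunion => // i /f_rep[].
move=> _ [[f' [f'_T ->]] orbit_f'].
apply: eq_gunion => i ik.
case: (Tfam_transversal ik) => _ /(_ _ (spanning_tree_restr Ytree ik))[X [_ uniqX]].
rewrite -(uniqX _ (f_rep i ik)) (uniqX (f' i)) //; split; first exact: f'_T.
have f'_tree j : j < k -> spanning_tree (Gs j) (f' j).
  by move=> jk; apply: Tfam_tree (f'_T j jk).
by rewrite -(restr_gunion f'_tree ik); apply: same_orbit_restr.
Qed.

End Automorphisms.

End Serial.

Lemma osp_two_terminal (T : finType) (H : graph T) a b : osp H a b -> two_terminal H a b.
Proof.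
elim=> {H a b} [a b ab | k Gs ss ts G s t st serialG _ IH
                        | k Gs ss ts G s t st parallelG _ IH].
- split=> //; rewrite /gV ?set21 ?set22 //.
  + by move=> ed; rewrite inE => /eqP->; exists a, b; rewrite /gV set21 set22.
  + by apply: connect1; rewrite /adj set11.
  + by move=> v; rewrite !inE => /orP[]/eqP-> //; rewrite eqxx.
- exact: serial_two_terminal serialG IH st.
case: parallelG => k_gt1 terminals _ ->; have k0 : 0 < k by lia.
have IH' i : i < k -> two_terminal (Gs i) s t.
  by move=> ik; have [<- <-] := terminals i ik; apply: IH.
split=> //.
- by apply/mem_gunionV; exists 0 => //; apply: source_in (IH' 0 k0).
- by apply/mem_gunionV; exists 0 => //; apply: sink_in (IH' 0 k0).
- by apply: wf_gunion => i /IH'/two_terminal_wf.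
- exact: connect_subrel (adj_subset (gunion_subE Gs k0)) (connect_source_sink (IH' 0 k0)).
move=> v /mem_gunionV[i ik vi] vt.
apply: connect_subrel (adj_avoid_subset (gunion_subE Gs ik)) _.
exact: connect_avoid_sink (IH' i ik) _ vi vt.
Qed.

Lemma nonserial_avoid (T : finType) (H : graph T) a b v :
  nonserial H a b -> v != a -> v != b -> connect (adj_avoid (gE H) v) a b.
Proof.
case=> osp_H; case: osp_H => {H a b}
  [a b ab | k Gs ss ts G s t st serialG blocks | k Gs ss ts G s t st parallelG blocks]
  not_serial va vb.
- by apply: connect1; rewrite /adj_avoid /adj /gE set11 eq_sym va eq_sym vb.
- by case: not_serial; split=> //; exists k, Gs, ss, ts.
case: parallelG => k_gt1 terminals meet ->.
have blocks_tt i : i < k -> two_terminal (Gs i) s t.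
  by move=> ik; have [<- <-] := terminals i ik; apply/osp_two_terminal/blocks.
have [j jk vj] : exists2 j, j < k & v \notin gV (Gs j).
  have [v0|v0] := boolP (v \in gV (Gs 0)); last by exists 0 => //; lia.
  exists 1 => //; apply/negP => v1.
  have: v \in gV (Gs 0) :&: gV (Gs 1) by rewrite inE v0.
  by rewrite meet ?(ltnW k_gt1) // !inE (negPf va) (negPf vb).
apply: connect_subrel (adj_avoid_subset (gunion_subE Gs jk)) _.
apply: connect_subrel (adj_avoid_notin (two_terminal_wf (blocks_tt j jk)) vj) _.
exact: connect_source_sink (blocks_tt j jk).
Qed.

Theorem theorem5p4 (T : finType) (G : graph T) (s t : T) (k : nat)
    (Gs : nat -> graph T) (ss ts : nat -> T)
    (Tfam : nat -> graph T -> Prop) :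
  s != t ->
  serial_cond k Gs ss ts G s t ->
  (forall i, i < k -> nonserial (Gs i) (ss i) (ts i)) ->
  (forall i, i < k -> orbit_transversal (Gs i) (ss i) (ts i) (Tfam i)) ->
  orbit_transversal G s t
    (fun X => exists f : nat -> graph T,
        (forall i, i < k -> Tfam i (f i)) /\ X = gunion k f).
Proof.
move=> _ G_serial blocks_nonserial blocks_transversal.
have blocks_tt i : i < k -> two_terminal (Gs i) (ss i) (ts i).
  by case/blocks_nonserial => /osp_two_terminal.
apply: (serial_orbit_transversal G_serial blocks_tt _ blocks_transversal) => i v ik.
exact: nonserial_avoid (blocks_nonserial i ik).
Qed.
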